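(* Let $G$ be an $\alpha_i$-metric graph ($i\ge 0$ an integer), let $x,y$ be a pair of mutually distant vertices of $G$, and let $z$ be a middle vertex of an arbitrary shortest path connecting $x$ and $y$. Then $e(z)\le rad(G)+2i+1$. Furthermore, there is a vertex $c\in S_{\lfloor d(x,y)/2\rfloor}(x,y)$ with $e(c)\le rad(G)+i$.
   Context: All graphs are finite, connected, unweighted, undirected, simple; $d(u,v)$ is the shortest-path distance. $I(u,v)=\{x: d(u,x)+d(x,v)=d(u,v)\}$; $S_k(u,v)=\{x\in I(u,v): d(u,x)=k\}$. A graph is $\alpha_i$-metric if for all vertices $u,v,w,x$: whenever $v\in I(u,w)$, $w\in I(v,x)$ and $v,w$ are adjacent, then $d(u,x)\ge d(u,v)+d(v,x)-i$. $e(v)=\max_u d(u,v)$, $rad(G)=\min_v e(v)$. Vertices $x,y$ are mutually distant if $e(x)=e(y)=d(x,y)$. A middle vertex of a shortest $(x,y)$-path is a vertex $z$ on it with $\{d(x,z),d(y,z)\}=\{\lfloor d(x,y)/2\rfloor,\lceil d(x,y)/2\rceil\}$. *)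

From mathcomp Require Import all_boot all_order.
Set Implicit Arguments. Unset Strict Implicit. Unset Printing Implicit Defensive.

Section Graph.
Variables (T : finType) (g : rel T).

Definition simple_graph := symmetric g /\ irreflexive g.
Definition connected_graph := forall u v : T, connect g u v.

Fixpoint walkn (n : nat) (u v : T) : bool :=
  if n is n'.+1 then [exists w, g u w && walkn n' w v] else u == v.

(* shortest-path distance: least n with a walk (equivalently a path) of
   length n from u to v; in a connected graph such an n is < #|T|. *)
Definition dist (u v : T) : nat := find (fun n => walkn n u v) (iota 0 #|T|).

Definition interval (u v : T) : pred T := fun x => dist u x + dist x v == dist u v.

Definition slice (k : nat) (u v : T) : pred T :=
  fun x => (x \in interval u v) && (dist u x == k).

(* alpha_i-metric (nat arithmetic: d(u,x) >= d(u,v)+d(v,x)-i, written additively) *)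
Definition alpha_metric (i : nat) : Prop :=
  forall u v w x : T, v \in interval u w -> w \in interval v x -> g v w ->
    dist u v + dist v x <= dist u x + i.

Definition ecc (v : T) : nat := \max_(u : T) dist u v.
Definition rad : nat := \big[minn/#|T|]_(v : T) ecc v.

Definition mutually_distant (x y : T) : Prop := ecc x = dist x y /\ ecc y = dist x y.

Definition shortest_path (x y : T) (p : seq T) : Prop :=
  [/\ path g x p, last x p = y & size p = dist x y].

Definition middle_vertex (x y : T) (p : seq T) (z : T) : Prop :=
  z \in x :: p /\
  ((dist x z = (dist x y)./2 /\ dist y z = uphalf (dist x y)) \/
   (dist x z = uphalf (dist x y) /\ dist y z = (dist x y)./2)).

End Graph.

From mathcomp Require Import all_boot all_order zify.
Set Implicit Arguments. Unset Strict Implicit. Unset Printing Implicit Defensive.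

(* Write r = rad G and D = d(x,y).  As e(x) = e(y) = D, every vertex lies within
   D of both x and y, and D <= 2r.  The alpha_i-inequality along an edge gives
   two facts.  First, every slice S_k(x,y) has diameter at most i+1: compare two
   of its vertices with neighbours in S_(k-1)(x,y).  Second, when k <= r and
   D <= k + r, a step from c in S_k(x,y) towards a vertex t with d(c,t) > r + i
   stays in S_k(x,y) and moves no vertex s farther than max(d(s,c), r) away; so
   a vertex of S_k(x,y) minimising the sum over s of (d(s,c) - r - i)^+ has
   eccentricity at most r + i.  Both k = floor(D/2) and k = d(x,z) qualify, and
   z is within i+1 of the vertex found in its own slice. *)

Section Walks.
Variables (T : finType) (g : rel T).

Lemma walkn_cat m n u v w :
  walkn g m u v -> walkn g n v w -> walkn g (m + n) u w.
Proof.
elim: m u => [|m IH] u /=; first by move/eqP->.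
case/existsP=> u' /andP[Huu' Hu'v] Hvw.
by apply/existsP; exists u'; rewrite Huu' (IH _ Hu'v Hvw).
Qed.

Lemma walkn_sym n u v : symmetric g -> walkn g n u v -> walkn g n v u.
Proof.
move=> Hs; elim: n u v => [|n IH] u v; first by move=> /= /eqP->.
case/existsP=> w /andP[Huw Hwv]; rewrite -addn1; apply: walkn_cat (IH _ _ Hwv) _.
by apply/existsP; exists u; rewrite Hs Huw eqxx.
Qed.

Lemma path_walkn u p : path g u p -> walkn g (size p) u (last u p).
Proof.
elim: p u => [|a p IH] u //= /andP[Hua Hp].
by apply/existsP; exists a; rewrite Hua (IH _ Hp).
Qed.

Lemma dist_le_card u v : dist g u v <= #|T|.
Proof. by apply: leq_trans (find_size _ _) _; rewrite size_iota. Qed.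

Lemma dist_le_walkn n u v : walkn g n u v -> dist g u v <= n.
Proof.
move=> Hn; case: (ltnP n #|T|) => [ltnT|]; last exact: leq_trans (dist_le_card u v).
rewrite leqNgt; apply/negP => /(before_find 0).
by rewrite nth_iota // add0n Hn.
Qed.

Lemma walkn_dist u v : connected_graph g -> walkn g (dist g u v) u v.
Proof.
move=> Hc; have [p Hp ->] := connectP (Hc u v).
have [q Hq Huq _] := shortenP Hp.
have Hqwalk := path_walkn Hq.
have Hqsize : size q < #|T| by have := max_card (mem (u :: q)); rewrite (card_uniqP Huq).
have Hfind : has (fun n => walkn g n u (last u q)) (iota 0 #|T|).
  by apply/hasP; exists (size q); rewrite ?mem_iota ?add0n.
have Hdist := leq_ltn_trans (dist_le_walkn Hqwalk) Hqsize.
by have := nth_find 0 Hfind; rewrite -/(dist g u (last u q)) nth_iota // add0n.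
Qed.

End Walks.

Section Metric.
Variables (T : finType) (g : rel T).
Hypotheses (Hs : symmetric g) (Hc : connected_graph g).
Notation d := (dist g).

Lemma dist_xx u : d u u = 0.
Proof. by apply/eqP; rewrite -leqn0; apply: (@dist_le_walkn _ _ 0); rewrite /= eqxx. Qed.

Lemma dist_eq0 u v : d u v = 0 -> u = v.
Proof. by move=> Huv; have := walkn_dist u v Hc; rewrite Huv => /eqP. Qed.

Lemma distC u v : d u v = d v u.
Proof. by apply/eqP; rewrite eqn_leq !dist_le_walkn // walkn_sym // walkn_dist. Qed.

Lemma dist_triangle u v w : d u w <= d u v + d v w.
Proof. by apply: dist_le_walkn; apply: walkn_cat; apply: walkn_dist. Qed.

Lemma dist_adj u v : g u v -> d u v <= 1.
Proof. by move=> Huv; apply: dist_le_walkn; apply/existsP; exists v; rewrite Huv eqxx. Qed.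

Lemma dist_step u v n : d u v = n.+1 -> exists2 w, g u w & d w v = n.
Proof.
move=> Huv; have := walkn_dist u v Hc; rewrite Huv => /existsP[w /andP[Huw Hwv]].
exists w => //; have := dist_le_walkn Hwv; have := dist_triangle u w v.
have := dist_adj Huw; lia.
Qed.

Lemma dist_le_ecc u v : d u v <= ecc g v.
Proof. exact: (@leq_bigmax _ (fun u => d u v)). Qed.

Lemma exists_center (x0 : T) : exists c, ecc g c <= rad g.
Proof.
rewrite /rad; elim/big_ind: _ => [|m n [cm Hm] [cn Hn]|v _]; last by exists v.
- by exists x0; apply/bigmax_leqP => u _; apply: dist_le_card.
- by case: (leqP m n) => _; [exists cm | exists cn].
Qed.

Lemma ecc_le_dist_add u v : ecc g u <= d u v + ecc g v.
Proof.
apply/bigmax_leqP => t _; have := dist_triangle t v u; have := dist_le_ecc t v.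
rewrite (distC v u); lia.
Qed.

Lemma dist_le_rad2 u v : d u v <= rad g + rad g.
Proof.
have [c Hcu] := exists_center u; have := dist_triangle u c v.
have := leq_trans (dist_le_ecc u c) Hcu; have := leq_trans (dist_le_ecc v c) Hcu.
rewrite (distC v c); lia.
Qed.

Lemma sliceP k u v a :
  reflect (d u a + d a v = d u v /\ d u a = k) (a \in slice g k u v).
Proof.
apply: (iffP andP) => [[/eqP Huav /eqP Hua] | [Huav Hua]] //.
by split; [change (d u a + d a v == d u v) | ]; apply/eqP.
Qed.

Lemma slice_pred k u v a :
  a \in slice g k.+1 u v -> exists2 b, g a b & b \in slice g k u v.
Proof.
move=> /sliceP[Huav Hua]; have Hau : d a u = k.+1 by rewrite distC.
have [b Hab Hbu] := dist_step Hau.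
exists b => //; apply/sliceP; rewrite (distC u b) Hbu; split => //.
have := dist_triangle u b v; have := dist_triangle b a v; have := dist_adj Hab.
rewrite (distC u b) (distC b a) Hbu; lia.
Qed.

Lemma slice_inhabited k u v : k <= d u v -> exists a, a \in slice g k u v.
Proof.
move=> Hk; have -> : k = d u v - (d u v - k) by lia.
elim: (d u v - k) => [|n [a Ha]].
  by exists v; apply/sliceP; rewrite dist_xx subn0 addn0.
case: (posnP (d u v - n)) => Hn.
  by exists a; rewrite (_ : d u v - n.+1 = d u v - n) //; lia.
have [b _ Hb] : exists2 b, g a b & b \in slice g (d u v - n.+1) u v.
  by apply: slice_pred; rewrite subnSK //; lia.
by exists b.
Qed.

End Metric.

Section AlphaMetric.
Variables (T : finType) (g : rel T) (i : nat).
Hypotheses (Hs : symmetric g) (Hc : connected_graph g) (Halpha : alpha_metric g i).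
Notation d := (dist g).

Lemma alpha_step u c w t : g c w -> d w t < d c t -> d u c < d u w ->
  d u c + d c t <= d u t + i.
Proof.
move=> Hcw Hwt Hcu.
have Hcw1 : d c w = 1.
  have : d c w != 0 by apply: contraTneq Hwt => /(dist_eq0 Hc) ->; rewrite ltnn.
  have := dist_adj Hcw; lia.
apply: Halpha Hcw; apply/eqP.
- by have := dist_triangle Hc u c w; lia.
- by have := dist_triangle Hc c w t; lia.
Qed.

Lemma slice_diam x y k a b :
  a \in slice g k x y -> b \in slice g k x y -> d a b <= i.+1.
Proof.
elim: k a b => [|k IH] a b.
  by move=> /sliceP[_ /(dist_eq0 Hc) <-] /sliceP[_ /(dist_eq0 Hc) <-]; rewrite dist_xx.
move=> Ha' Hb'; have [a' Haa' Ha'k] := slice_pred Hs Hc Ha'.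
have [b' Hbb' Hb'k] := slice_pred Hs Hc Hb'.
have Ha'b' := IH _ _ Ha'k Hb'k.
move: Ha' Hb' Ha'k Hb'k => /sliceP[Ha1 Ha2] /sliceP[Hb1 Hb2] /sliceP[Ha'1 Ha'2] /sliceP[Hb'1 Hb'2].
have Ha'b : d a' b <= i.+1.
  case: (leqP (d a' b) (d a' b')) => [/leq_trans -> // | Hlt].
  have Hb'b : g b' b by rewrite Hs.
  have Hby : d b y < d b' y by lia.
  have := alpha_step Hb'b Hby Hlt; have := dist_triangle Hc a' b' b.
  have := dist_adj Hbb'; rewrite (distC Hs Hc b b'); lia.
case: (leqP (d a b) (d a' b)) => [/leq_trans -> // | Hlt].
have Hay : d y a < d y a' by rewrite (distC Hs Hc y a) (distC Hs Hc y a'); lia.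
have := alpha_step Haa' Hlt Hay; rewrite (distC Hs Hc y a) (distC Hs Hc y b); lia.
Qed.

Lemma dist_step_far s c w t : g c w -> d w t < d c t -> rad g + i < d c t ->
  d s w <= maxn (d s c) (rad g).
Proof.
move=> Hcw Hwt Hct; case: (leqP (d s w) (d s c)) => [Hle | Hlt].
  by rewrite leq_max Hle.
have := alpha_step Hcw Hwt Hlt; have := dist_le_rad2 Hs Hc s t.
have := dist_triangle Hc s c w; have := dist_adj Hcw; lia.
Qed.

Definition excess (c : T) : nat := \sum_(s : T) (d s c - (rad g + i)).

Lemma excess_step_far c w t : g c w -> d w t < d c t -> rad g + i < d c t ->
  excess w < excess c.
Proof.
move=> Hcw Hwt Hct; rewrite /excess (bigD1 t) //= [X in _ < X](bigD1 t) //=.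
have : \sum_(s | s != t) (d s w - (rad g + i)) <= \sum_(s | s != t) (d s c - (rad g + i)).
  by apply: leq_sum => s _; have := dist_step_far s Hcw Hwt Hct; lia.
rewrite (distC Hs Hc t w) (distC Hs Hc t c); lia.
Qed.

Section Descent.
Variables (x y : T) (k : nat).
Hypotheses (Hxy : mutually_distant g x y) (Hkr : k <= rad g) (Hxyk : d x y <= k + rad g).

Lemma slice_step_far c w t : c \in slice g k x y -> g c w -> d w t < d c t ->
  rad g + i < d c t -> w \in slice g k x y.
Proof.
case: Hxy => Hex Hey /sliceP[Hc1 Hc2] Hcw Hwt Hct.
have Hxt : d x t <= d x y by rewrite distC // -Hex dist_le_ecc.
have Hyt : d y t <= d x y by rewrite distC // -Hey dist_le_ecc.
have Hxw : d x w <= d x c.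
  by rewrite leqNgt; apply/negP => /(alpha_step Hcw Hwt); lia.
have Hyw : d y w <= d y c.
  by rewrite leqNgt; apply/negP => /(alpha_step Hcw Hwt); rewrite (distC Hs Hc y c); lia.
apply/sliceP; have := dist_triangle Hc x w y.
rewrite (distC Hs Hc w y) (distC Hs Hc c y) in Hc1 *; lia.
Qed.

Lemma exists_slice_low_ecc a : a \in slice g k x y ->
  exists2 c, c \in slice g k x y & ecc g c <= rad g + i.
Proof.
move=> Ha; case: (arg_minnP excess Ha) => c Hcs Hmin; exists c => //.
apply/bigmax_leqP => t _; rewrite distC // leqNgt; apply/negP => Hct.
have [w Hcw Hwt] : exists2 w, g c w & d w t < d c t.
  have [|w Hcw Hwt] := @dist_step _ _ Hc c t (d c t).-1; first by lia.
  by exists w => //; lia.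
have := Hmin w (slice_step_far Hcs Hcw Hwt Hct).
by rewrite leqNgt (excess_step_far Hcw Hwt Hct).
Qed.

End Descent.
End AlphaMetric.

Theorem lemma5 (T : finType) (g : rel T) (i : nat)
  (Hsimple : simple_graph g) (Hconn : connected_graph g)
  (Halpha : alpha_metric g i)
  (x y : T) (Hxy : mutually_distant g x y)
  (p : seq T) (Hp : shortest_path g x y p)
  (z : T) (Hz : middle_vertex g x y p z) :
  ecc g z <= rad g + 2 * i + 1 /\
  exists2 c, c \in slice g (dist g x y)./2 x y & ecc g c <= rad g + i.
Proof.
case: Hsimple => Hs _; case: Hz => _ Hz.
have Hxy2 := dist_le_rad2 Hs Hconn x y.
have Hzs : z \in slice g (dist g x z) x y.
  by apply/sliceP; split => //; rewrite (distC Hs Hconn z y); case: Hz => [[]|[]]; lia.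
have Hzr : dist g x z <= rad g by case: Hz => [[]|[]]; lia.
have Hxyz : dist g x y <= dist g x z + rad g by case: Hz => [[]|[]]; lia.
split.
  have [c Hcs Hc] := exists_slice_low_ecc Hs Hconn Halpha Hxy Hzr Hxyz Hzs.
  have := slice_diam Hs Hconn Halpha Hzs Hcs; have := ecc_le_dist_add Hs Hconn z c; lia.
have Hhalf : (dist g x y)./2 <= dist g x y by lia.
have [a Ha] := slice_inhabited Hs Hconn Hhalf.
by apply: (exists_slice_low_ecc Hs Hconn Halpha Hxy _ _ Ha); lia.
Qed.
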